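(* Let $n\ge 1$, let $\chi$ be an irreducible character of $S_n$, let $1\le k\le n$, let $X\in M_n(\mathbb{C})$ and fix $\alpha\in Q_{k,n}$. Then $$d_\chi(X)=\sum_{\beta\in Q_{k,n}} d_\chi\Big(X[\alpha|\beta]\bigoplus_{\alpha|\beta}X(\alpha|\beta)\Big).$$
   Context: $d_\chi(A)=\sum_{\sigma\in S_n}\chi(\sigma)\prod_{i=1}^n a_{i\sigma(i)}$ for $A=(a_{ij})\in M_n(\mathbb{C})$. $Q_{k,n}$ is the set of strictly increasing maps $\{1,\ldots,k\}\to\{1,\ldots,n\}$. For $\alpha\in Q_{k,n}$, $\bar\alpha$ is the unique element of $Q_{n-k,n}$ whose image is the complement of the image of $\alpha$. For $\alpha,\beta\in Q_{k,n}$, $X[\alpha|\beta]$ is the $k\times k$ matrix with $(i,j)$ entry $x_{\alpha(i)\beta(j)}$, and $X(\alpha|\beta)$ is the $(n-k)\times(n-k)$ matrix obtained from $X$ by deleting rows $\alpha(1),\ldots,\alpha(k)$ and columns $\beta(1),\ldots,\beta(k)$. For a $k\times k$ matrix $P=(p_{ij})$ and an $(n-k)\times(n-k)$ matrix $R=(r_{ij})$, $P\bigoplus_{\alpha|\beta}R=(y_{ij})$ is the $n\times n$ matrix with $y_{ij}=0$ if exactly one of $i\in\operatorname{Im}\alpha$, $j\in\operatorname{Im}\beta$ holds; $y_{ij}=p_{\alpha^{-1}(i)\beta^{-1}(j)}$ if $i\in\operatorname{Im}\alpha$ and $j\in\operatorname{Im}\beta$; and $y_{ij}=r_{\bar\alpha^{-1}(i)\bar\beta^{-1}(j)}$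 if $i\notin\operatorname{Im}\alpha$ and $j\notin\operatorname{Im}\beta$. *)

From HB Require Import structures.
From mathcomp Require Import all_boot all_order all_algebra all_fingroup all_field all_character.
From mathcomp Require Import complex reals.
Set Implicit Arguments. Unset Strict Implicit. Unset Printing Implicit Defensive.
Import Order.TTheory GRing.Theory Num.Theory.
Local Open Scope ring_scope.

(* Q_{k,n}: strictly increasing maps {1..k} -> {1..n} (0-based here). *)
Definition strinc (k n : nat) (a : {ffun 'I_k -> 'I_n}) : bool :=
  [forall i : 'I_k, forall j : 'I_k, (i < j)%N ==> (a i < a j)%N].

Definition compl_seq (k n : nat) (a : {ffun 'I_k -> 'I_n}) : seq 'I_n :=
  [seq j <- enum 'I_n | j \notin codom a].

Definition abar (k n : nat) (a : {ffun 'I_k -> 'I_n}) (i : 'I_(n - k)) : 'I_n :=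
  nth (widen_ord (leq_subr k n) i) (compl_seq a) i.

Definition immanant (C : comRingType) (n : nat) (chi : {perm 'I_n} -> C)
  (A : 'M[C]_n) : C :=
  \sum_(s : {perm 'I_n}) chi s * \prod_(i < n) A i (s i).

Definition submx_ab (C : Type) (k n : nat) (X : 'M[C]_n)
  (a b : {ffun 'I_k -> 'I_n}) : 'M[C]_k :=
  \matrix_(i < k, j < k) X (a i) (b j).

Definition delmx_ab (C : Type) (k n : nat) (X : 'M[C]_n)
  (a b : {ffun 'I_k -> 'I_n}) : 'M[C]_(n - k) :=
  \matrix_(i < n - k, j < n - k) X (abar a i) (abar b j).

Definition dsum_ab (C : nmodType) (k n : nat) (a b : {ffun 'I_k -> 'I_n})
  (P : 'M[C]_k) (R : 'M[C]_(n - k)) : 'M[C]_n :=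
  \matrix_(i < n, j < n)
    match [pick p | a p == i], [pick q | b q == j] with
    | Some p, Some q => P p q
    | None, None =>
        match [pick p | abar a p == i], [pick q | abar b q == j] with
        | Some p, Some q => R p q
        | _, _ => 0
        end
    | _, _ => 0
    end.

From HB Require Import structures.
From mathcomp Require Import all_boot all_order all_algebra all_fingroup all_field all_character.
From mathcomp Require Import complex reals.
Import Order.TTheory GRing.Theory Num.Theory.
Set Implicit Arguments. Unset Strict Implicit. Unset Printing Implicit Defensive.
Local Open Scope ring_scope.

(* Proof idea: the (i, j) entry of X[a|b] (+)_{a|b} X(a|b) is X i j when the
   memberships i \in Im a and j \in Im b agree, and 0 otherwise.  Hence the
   term of its immanant indexed by a permutation s is the s-term of d_chi(X)
   if s maps Im a onto Im b, and 0 otherwise.  Since s maps Im a onto a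
   single k-subset, i.e. onto Im b for exactly one b in Q_{k,n}, summing over
   b yields every term of d_chi(X) exactly once.  Neither the character chi
   nor the bounds on k and n play any role. *)

Lemma lt_sorted_enum_ord n : sorted <%O (enum 'I_n).
Proof. by have := iota_ltn_sorted 0 n; rewrite -val_enum_ord sorted_map. Qed.

Section StrictlyIncreasing.

Variables k n : nat.
Implicit Types a b : {ffun 'I_k -> 'I_n}.

Lemma nth_codom_ord (T : Type) (x0 : T) (f : 'I_k -> T) (i : 'I_k) :
  nth x0 (codom f) i = f i.
Proof. by rewrite codomE (nth_map i) ?size_enum_ord // nth_ord_enum. Qed.

Lemma strincE a : strinc a = sorted <%O (codom a).
Proof.
apply/forallP/idP => [lt_a | sorted_a i].
  rewrite codomE sorted_map; apply: sub_sorted (lt_sorted_enum_ord k) => i j.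
  exact: (implyP (forallP (lt_a i) j)).
apply/forallP => j; apply/implyP => ltij.
have size_a : size (codom a) = k by rewrite size_codom card_ord.
have := lt_sorted_ltn_nth (a i) sorted_a; rewrite size_a.
move=> /(_ i j (ltn_ord i) (ltn_ord j)).
by rewrite !nth_codom_ord ltij.
Qed.

Lemma strinc_inj a : strinc a -> injective a.
Proof. by rewrite strincE => /lt_sorted_uniq /injectiveP. Qed.

Lemma strinc_codom_inj b1 b2 : strinc b1 -> strinc b2 ->
  codom b1 =i codom b2 -> b1 = b2.
Proof.
rewrite !strincE => sorted_b1 sorted_b2 eq_b12.
by apply/(can_inj fgraphK)/val_inj; apply: lt_sorted_eq.
Qed.

Lemma strinc_codom_exists (S : {set 'I_n}) : #|S| = k ->
  exists2 b : {ffun 'I_k -> 'I_n}, strinc b & codom b =i S.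
Proof.
rewrite cardE => /eqP size_S; pose t := Tuple size_S.
have codom_t : codom [ffun i => tnth t i] = t.
  by rewrite codomE -[RHS]map_tnth_enum; apply: eq_map => i; rewrite ffunE.
exists [ffun i => tnth t i]; last by move=> y; rewrite codom_t mem_enum.
by rewrite strincE codom_t /= /enum_mem -enumT lt_sorted_filter ?lt_sorted_enum_ord.
Qed.

Lemma strinc_codom_pred1 (S : {set 'I_n}) : #|S| = k ->
  exists b0 : {ffun 'I_k -> 'I_n},
    forall b, (strinc b && ([set y in codom b] == S)) = (b == b0).
Proof.
move=> /strinc_codom_exists [b0 inc_b0 codom_b0]; exists b0 => b.
apply/andP/eqP => [[inc_b /eqP/setP codom_b] | ->].
  by apply: strinc_codom_inj => // y; rewrite codom_b0 -codom_b inE.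
by split => //; apply/eqP/setP => y; rewrite inE codom_b0.
Qed.

End StrictlyIncreasing.

Lemma perm_onto (T : finType) (s : {perm T}) (A B : {pred T}) :
  [forall x, (x \in A) == (s x \in B)] = ([set y in B] == s @: A).
Proof.
have s_inj : injective s by apply: perm_inj.
apply/forallP/eqP => [mapsA | /setP onto x]; last first.
  by have := onto (s x); rewrite inE mem_imset // => ->.
apply/setP => y; rewrite inE -[y](permKV s) mem_imset //.
by rewrite (eqP (mapsA _)).
Qed.

Lemma notin_codom (T : finType) (U : eqType) (f : T -> U) y :
  (forall x, (f x == y) = false) -> y \notin codom f.
Proof. by move=> Nf; apply/codomP => -[x y_fx]; have := Nf x; rewrite y_fx eqxx. Qed.

Section Complement.

Variables k n : nat.
Variable a : {ffun 'I_k -> 'I_n}.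
Hypothesis a_inj : injective a.

Lemma size_compl_seq : size (compl_seq a) = (n - k)%N.
Proof.
have -> : compl_seq a = enum [predC codom a].
  by rewrite /compl_seq enumT /enum_mem; apply: eq_filter => j; rewrite !inE.
rewrite -cardE; have := cardC (mem (codom a)).
rewrite card_codom // !card_ord => card_n.
by rewrite -[X in (X - k)%N]card_n addKn.
Qed.

Lemma abar_onto i : i \notin codom a -> exists p, abar a p = i.
Proof.
move=> i_compl; have i_in : i \in compl_seq a by rewrite mem_filter i_compl mem_enum.
have lt_i : (index i (compl_seq a) < n - k)%N by rewrite -size_compl_seq index_mem.
by exists (Ordinal lt_i); rewrite /abar nth_index.
Qed.

End Complement.

Section BlockSum.

Variables (C : nmodType) (k n : nat) (X : 'M[C]_n).
Variables a b : {ffun 'I_k -> 'I_n}.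
Hypotheses (a_inj : injective a) (b_inj : injective b).

Lemma dsum_abE i j :
  dsum_ab a b (submx_ab X a b) (delmx_ab X a b) i j =
  if (i \in codom a) == (j \in codom b) then X i j else 0.
Proof.
rewrite /dsum_ab mxE.
case: pickP => [p /eqP <- | /notin_codom/negbTE i_compl];
  case: pickP => [q /eqP <- | /notin_codom/negbTE j_compl].
- by rewrite !codom_f mxE.
- by rewrite codom_f j_compl.
- by rewrite codom_f i_compl.
rewrite i_compl j_compl /=.
have [p <-] := abar_onto a_inj (negbT i_compl).
have [q <-] := abar_onto b_inj (negbT j_compl).
case: pickP => [p' /eqP <- | /(_ p)]; last by rewrite eqxx.
by case: pickP => [q' /eqP <- | /(_ q)]; rewrite ?mxE ?eqxx.
Qed.

End BlockSum.

Lemma prod_dsum_ab (C : comRingType) k n (X : 'M[C]_n)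
    (a b : {ffun 'I_k -> 'I_n}) (s : {perm 'I_n}) :
  injective a -> injective b ->
  \prod_(i < n) dsum_ab a b (submx_ab X a b) (delmx_ab X a b) i (s i) =
  if [forall i, (i \in codom a) == (s i \in codom b)]
  then \prod_(i < n) X i (s i) else 0.
Proof.
move=> a_inj b_inj; case: ifP => [/forallP onto | /negbT/forallPn [i not_onto]].
  by apply: eq_bigr => i _; rewrite dsum_abE // onto.
by rewrite (bigD1 i) //= dsum_abE // (negbTE not_onto) mul0r.
Qed.

Theorem immanant_laplace (C : comRingType) n (chi : {perm 'I_n} -> C)
    k (X : 'M[C]_n) (a : {ffun 'I_k -> 'I_n}) :
  injective a ->
  immanant chi X =
  \sum_(b : {ffun 'I_k -> 'I_n} | strinc b)
     immanant chi (dsum_ab a b (submx_ab X a b) (delmx_ab X a b)).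
Proof.
move=> a_inj; symmetry; rewrite /immanant.
under eq_bigr => b /strinc_inj b_inj do
  under eq_bigr => s _ do rewrite prod_dsum_ab // perm_onto.
rewrite exchange_big; apply: eq_bigr => s _.
rewrite -big_distrr -big_mkcondr /=; congr (_ * _).
have card_image : #|s @: codom a| = k.
  by rewrite card_imset ?card_codom ?card_ord //; apply: perm_inj.
have [b0 onto_b0] := strinc_codom_pred1 card_image.
by rewrite (big_pred1 b0).
Qed.

Local Open Scope complex_scope.

Theorem mainTheorem4 (R : realType) (f : {rmorphism algC -> R[i]})
  (n : nat) (hn : (1 <= n)%N)
  (c : Iirr [set: {perm 'I_n}]%G)
  (k : nat) (hk1 : (1 <= k)%N) (hkn : (k <= n)%N)
  (X : 'M[R[i]]_n) (a : {ffun 'I_k -> 'I_n}) (ha : strinc a) :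
  let chi := fun s : {perm 'I_n} => f ('chi[[set: {perm 'I_n}]%G]_c s) in
  immanant chi X =
  \sum_(b : {ffun 'I_k -> 'I_n} | strinc b)
     immanant chi (dsum_ab a b (submx_ab X a b) (delmx_ab X a b)).
Proof. by move=> chi; apply: immanant_laplace; apply: strinc_inj. Qed.
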